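(* Let $G$ be a simple undirected graph with exactly three leaves. (1) If $G$ admits a taming net, then $G$ has no sapling. (2) If an $X$-net $\mathbb{H}$ of $G$ has no parallel arcs, then every $\mathbb{H}$-tamed subset of $X$ is $\mathbb{H}$-local.
   Context: A sapling of $G$ is an induced tree of $G$ containing all three leaves of $G$. For $U,V\subseteq V(G)$, a $UV$-path is a single vertex of $U\cap V$ or a path with one end in $U$ and the other in $V$; a $UV$-rung is a vertex-minimal induced $UV$-path. $\nabla(\mathbb{H})$ adds an edge between every two leaves of $\mathbb{H}$. An $X$-net ($X\subseteq V(G)$) is a finite loopless multigraph $\mathbb{H}$ whose nodes and arcs are subsets of $X$ such that: (N1) $\mathbb{H}$ is connected and $\nabla(\mathbb{H})$ biconnected; (N2) the arcs are nonempty, pairwise disjoint, and partition $X$; (N3) $\mathbb{H}$ has exactly three leaf nodes, each a single leaf vertex of $G$; (N4) for each arc $E$ with end-nodes $U,V$, each vertex of $E$ lies on a $UV$-rung of $G[E]$; (N5) for arc $E$ and node $V$, $E\cap V\ne\emptyset$ iff $V$ is an end-node of $E$; (N6) for $u,v\in X$ in distinct arcs $E,F$, $uv\in E(G)$ iff $E,F$ share an end-node $V$ with $\{u,v\}\subseteq V$. A net is an $X$-net for some $X$. For an $X$-net $\mathbb{H}$: $S\subseteq X$ is $\mathbb{H}$-tamed if every two vertices of $S$ lie in a common arc or a common node; $Y\subseteq V(G)\setminus X$ is $\mathbb{H}$-tamed if the set of vertices of $X$ adjacent to $Y$ is $\mathbb{H}$-tamed; $\mathbb{H}$ is taming if every $Y\subseteq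 V(G)\setminus X$ with $G[Y]$ connected is $\mathbb{H}$-tamed. A triad is $(V_1\cap V_2)\cup(V_2\cap V_3)\cup(V_3\cap V_1)$ for nodes $V_1,V_2,V_3$ forming a triangle in $\mathbb{H}$; $S\subseteq X$ is $\mathbb{H}$-local if $S$ is contained in a node, an arc, or a triad of $\mathbb{H}$. *)

(* Finite simple graphs as symmetric irreflexive relations. *)
From mathcomp Require Import all_boot.

Set Implicit Arguments. Unset Strict Implicit. Unset Printing Implicit Defensive.

Section Defs.
Variable T : finType.
Variable e : rel T.

Definition conn_in (T' : finType) (r : rel T') (S : {set T'}) : Prop :=
  forall x y, x \in S -> y \in S ->
    exists p : seq T', [/\ path r x p, all (mem S) p & last x p = y].

Definition leafG (v : T) : bool := #|[set u | e v u]| == 1.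
Definition leavesG : {set T} := [set v | leafG v].

Definition has_cycle_in (S : {set T}) : Prop :=
  exists c : seq T, [/\ 3 <= size c, uniq c, all (mem S) c & cycle e c].

Definition induced_tree (S : {set T}) : Prop :=
  S != set0 /\ conn_in e S /\ ~ has_cycle_in S.

Definition sapling (S : {set T}) : Prop := induced_tree S /\ leavesG \subset S.

(* p is a UV-path of G[W] (a single vertex of U :&: V is the case size p = 1) *)
Definition uvpath (W U V : {set T}) (p : seq T) : bool :=
  if p is x :: q then
    [&& uniq p, path e x q, all (mem W) p &
        ((x \in U) && (last x q \in V)) || ((x \in V) && (last x q \in U))]
  else false.

Definition induced_path (p : seq T) : Prop :=
  forall (d : T) (i j : nat), i.+1 < j -> j < size p -> ~~ e (nth d p i) (nth d p j).

Definition rung (W U V : {set T}) (p : seq T) : Prop :=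
  [/\ uvpath W U V p, induced_path p &
      forall p', uvpath W U V p' -> induced_path p' ->
        ~ ([set x in p'] \proper [set x in p])].

Record mgraph := MGraph {
  nodes : {set {set T}};
  arcs  : {set {set T}};
  ends  : {set T} -> {set {set T}}
}.

Variable H : mgraph.

Definition mg_wf : Prop :=
  forall E, E \in arcs H -> ends H E \subset nodes H /\ #|ends H E| = 2.

Definition adjH : rel {set T} :=
  fun U V => [exists E in arcs H, [&& U \in ends H E, V \in ends H E & U != V]].

Definition degH (V : {set T}) : nat := #|[set E in arcs H | V \in ends H E]|.
Definition leafnode (V : {set T}) : bool := (V \in nodes H) && (degH V == 1).
Definition leafnodes : {set {set T}} := [set V in nodes H | leafnode V].

Definition adj_nabla : rel {set T} :=
  fun U V => adjH U V || [&& leafnode U, leafnode V & U != V].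

Definition biconnected (r : rel {set T}) (N : {set {set T}}) : Prop :=
  conn_in r N /\ forall V, V \in N -> conn_in r (N :\ V).

Definition is_net (X : {set T}) : Prop :=
  mg_wf /\
  (forall V, V \in nodes H -> V \subset X) /\
  (* N1 *) (conn_in adjH (nodes H) /\ biconnected adj_nabla (nodes H)) /\
  (* N2 *) partition (arcs H) X /\
  (* N3 *) (#|leafnodes| = 3 /\
            (forall V, V \in leafnodes -> exists v, leafG v /\ V = [set v])) /\
  (* N4 *) (forall E U V, E \in arcs H -> U \in ends H E -> V \in ends H E ->
              U != V -> forall x, x \in E -> exists p, rung E U V p /\ x \in p) /\
  (* N5 *) (forall E V, E \in arcs H -> V \in nodes H ->
              (E :&: V != set0) = (V \in ends H E)) /\
  (* N6 *) (forall u v E F, u \in X -> v \in X -> E \in arcs H -> F \in arcs H ->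
              E != F -> u \in E -> v \in F ->
              (e u v <-> exists2 V, V \in ends H E :&: ends H F & (u \in V) && (v \in V))).

Definition tamed_in (S : {set T}) : Prop :=
  forall u v, u \in S -> v \in S ->
    (exists2 E, E \in arcs H & (u \in E) && (v \in E)) \/
    (exists2 V, V \in nodes H & (u \in V) && (v \in V)).

Definition nbrs_in (X Y : {set T}) : {set T} := [set x in X | [exists y in Y, e x y]].

Definition tamed_out (X Y : {set T}) : Prop := tamed_in (nbrs_in X Y).

Definition taming (X : {set T}) : Prop :=
  forall Y : {set T}, Y \subset ~: X -> conn_in e Y -> tamed_out X Y.

Definition triad (V1 V2 V3 : {set T}) : {set T} :=
  (V1 :&: V2) :|: (V2 :&: V3) :|: (V3 :&: V1).

Definition local (S : {set T}) : Prop :=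
  (exists2 V, V \in nodes H & S \subset V) \/
  (exists2 E, E \in arcs H & S \subset E) \/
  (exists V1 V2 V3, [/\ V1 \in nodes H, V2 \in nodes H, V3 \in nodes H,
      [&& adjH V1 V2, adjH V2 V3 & adjH V3 V1] & S \subset triad V1 V2 V3]).

Definition has_parallel_arcs : Prop :=
  exists E F, [/\ E \in arcs H, F \in arcs H, E != F & ends H E = ends H F].

End Defs.

(* An induced tree containing the three leaves l1, l2, l3 contains a spider:
   a vertex c and three walks from c to the leaves with no edge between
   different legs (c is where a shortest walk from l3 reaches an l1-l2 path).
   For (1), take an arc E entered by every leg: the arc of c, or, when c lies
   outside X, the arc that taming (applied to the part of the legs before X)
   forces to contain the first vertices of X on all three legs.  Each leg either
   ends inside E at its leaf or leaves E through an end, so two legs share an end M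
   of E.  By (N6) both must leave E at c and enter the same arc F through M; then
   both leave F through its other end, and (N6) produces an edge between the
   legs.  For (2), a tamed set contained in no node and no arc has vertices in
   three arcs whose ends pairwise meet in the nodes of a triangle, and
   tamedness puts every vertex into its triad. *)

From mathcomp Require Import all_boot.
Set Implicit Arguments. Unset Strict Implicit. Unset Printing Implicit Defensive.

Lemma last_take (T : Type) (x : T) (p : seq T) i :
  i <= size p -> last x (take i p) = nth x (x :: p) i.
Proof.
elim: p x i => [|y p IHp] x [|i] //= /[!ltnS] lei.
by rewrite IHp // (set_nth_default x).
Qed.

Lemma all_take (T : Type) (a : pred T) n s : all a s -> all a (take n s).
Proof. by rewrite -{1}(cat_take_drop n s) all_cat => /andP[]. Qed.

Lemma mem_belast_nth (T : eqType) (x u : T) (p : seq T) :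
  u \in belast x p -> exists2 t, t < size p & u = nth x (x :: p) t.
Proof.
case/(nthP x) => t; rewrite size_belast => ltp <-; exists t => //.
by rewrite lastI nth_rcons size_belast ltp.
Qed.

Lemma split_two (T : eqType) (s : seq T) x y : x \in s -> y \in s -> x != y ->
  exists a m d, s = a ++ x :: m ++ y :: d \/ s = a ++ y :: m ++ x :: d.
Proof.
case/splitPr: s / => a b yab neq_xy.
move: yab; rewrite mem_cat inE (eq_sym y) (negbTE neq_xy) /= => /orP[].
  by case/splitPr: a / => a1 a2; exists a1, a2, b; right; rewrite -catA.
by case/splitPr: b / => b1 b2; exists a, b1, b2; left.
Qed.

Lemma uniq_infix (T : eqType) (a s d : seq T) : uniq (a ++ s ++ d) -> uniq s.
Proof. by rewrite !cat_uniq => /and3P[_ _ /andP[]]. Qed.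

Lemma sorted_infix (T : Type) (r : rel T) (a s d : seq T) :
  sorted r (a ++ s ++ d) -> sorted r s.
Proof. by case/cat_sorted2 => _ /cat_sorted2[]. Qed.

Section Walks.
Variable T : finType.
Variable e : rel T.
Hypothesis e_sym : symmetric e.

Definition cross_free (A B : seq T) : Prop := {in A & B, forall x y, ~~ e x y}.

Definition leg (c : T) (Q : seq T) (l : T) : Prop := path e c Q /\ last c Q = l.

Definition spider (c : T) (Q1 Q2 Q3 : seq T) (l1 l2 l3 : T) : Prop :=
  [/\ leg c Q1 l1, leg c Q2 l2, leg c Q3 l3 &
    [/\ cross_free Q1 Q2, cross_free Q1 Q3 & cross_free Q2 Q3]].

Lemma cross_freeC A B : cross_free A B -> cross_free B A.
Proof. by move=> cAB x y xB yA; rewrite e_sym cAB. Qed.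

Lemma leg_rev x p : leg (last x p) (rev (belast x p)) x <-> path e x p.
Proof.
rewrite /leg rev_path (eq_path (e' := e)) => [|y z]; last exact: e_sym.
by split=> [[]|-> //]; case: p => //= y p; rewrite rev_cons last_rcons.
Qed.

Lemma path_prefix r s x : path e r s -> x \in r :: s ->
  exists p, [/\ path e r p, {subset p <= s} & last r p = x].
Proof.
move=> + xs; case/splitPl: s / xs => p1 p2 lp; rewrite cat_path => /andP[pp1 _].
by exists p1; split => // y yp; rewrite mem_cat yp.
Qed.

Lemma path_restrict (S : {set T}) x p : x \in S ->
  path [rel u v | [&& u \in S, v \in S & e u v]] x p = path e x p && all (mem S) p.
Proof.
elim: p x => //= y p IHp x xS; rewrite xS /=.
by case yS: (y \in S); rewrite /= ?andbF // IHp // andbA.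
Qed.

Lemma conn_in_from (S : {set T}) r : r \in S ->
  (forall x, x \in S -> exists p, [/\ path e r p, all (mem S) p & last r p = x]) ->
  conn_in e S.
Proof.
move=> rS reach; pose eS := [rel u v | [&& u \in S, v \in S & e u v]].
have eS_sym : symmetric eS by move=> u v /=; rewrite e_sym andbCA.
have from_r x : x \in S -> connect eS r x.
  by case/reach => p [pp sp <-]; apply/connectP; exists p; rewrite ?path_restrict ?pp.
move=> x y xS yS; have : connect eS x y.
  by rewrite (connect_trans _ (from_r y yS)) // (sym_connect_sym eS_sym) from_r.
by case/connectP => p; rewrite path_restrict // => /andP[pp sp] ->; exists p.
Qed.

Variable S : {set T}.

Definition shortest_walk (x : T) (B : seq T) (q : seq T) : Prop :=
  [/\ path e x q, all (mem S) q, last x q \in B &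
      forall q', path e x q' -> all (mem S) q' -> last x q' \in B -> size q <= size q'].

Lemma shortest_walk_exists x B q :
  path e x q -> all (mem S) q -> last x q \in B -> exists q', shortest_walk x B q'.
Proof.
move=> pq aq lq.
(* Minimising over tuples makes the size predicate decidable. *)
pose P n := [exists t : n.-tuple T, [&& path e x t, all (mem S) t & last x t \in B]].
have exP : exists n, P n by exists (size q); apply/existsP; exists (in_tuple q); rewrite pq aq.
case: (ex_minnP exP) => n /existsP[t /and3P[pt st lt]] min_n.
exists t; split => // q' pq' aq' lq'; rewrite size_tuple; apply: min_n.
by apply/existsP; exists (in_tuple q'); rewrite pq' aq'.
Qed.

Lemma shortest_walk_before_end x B q t : shortest_walk x B q -> t < size q ->
  nth x (x :: q) t \notin B.
Proof.
case=> pq aq _ min_q ltq; apply/negP => tB.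
have := min_q (take t q) (take_path t pq) (all_take t aq).
by rewrite last_take ?(ltnW ltq) // size_take ltq => /(_ tB); rewrite leqNgt ltq.
Qed.

Lemma shortest_walk_far x B q t y : shortest_walk x B q -> t.+1 < size q ->
  y \in S -> y \in B -> ~~ e (nth x (x :: q) t) y.
Proof.
case=> pq aq _ min_q ltq yS yB; apply/negP => ety.
have ltq' : t < size q := ltnW ltq.
have := min_q (rcons (take t q) y).
rewrite rcons_path take_path // last_take ?(ltnW ltq') // ety all_rcons inE yS all_take //.
by rewrite last_rcons size_rcons size_take ltq' => /(_ isT isT yB); rewrite leqNgt ltq.
Qed.

Section Acyclic.
Hypothesis acyclic : ~ has_cycle_in e S.

Lemma acyclic_no_closing_edge w s : all (mem S) (w :: s) -> uniq (w :: s) ->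
  path e w s -> 1 < size s -> ~~ e (last w s) w.
Proof.
move=> sS us ps s2; apply/negP => ew; apply: acyclic; exists (w :: s).
by split => //=; rewrite rcons_path ps ew.
Qed.

Lemma acyclic_chordless a c b : all (mem S) (a ++ c :: b) -> uniq (a ++ c :: b) ->
  sorted e (a ++ c :: b) -> cross_free a b.
Proof.
move=> + + + x y xa yb; case/splitPr: a / xa => a1 a2; case/splitPr: b / yb => b1 b2.
set s := a2 ++ c :: rcons b1 y.
have -> : (a1 ++ x :: a2) ++ c :: b1 ++ y :: b2 = a1 ++ (x :: s) ++ b2.
  by rewrite /s -catA /= -catA /= cat_rcons.
rewrite all_cat all_cat => /and3P[_ sS _] /uniq_infix uS /sorted_infix ps.
have := acyclic_no_closing_edge sS uS ps.
rewrite /s last_cat /= last_rcons e_sym; apply.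
by rewrite size_cat /= size_rcons !addnS.
Qed.

Lemma acyclic_single_attachment L u x y : all (mem S) L -> uniq L -> sorted e L ->
  u \in S -> u \notin L -> x \in L -> y \in L -> e u x -> e u y -> x = y.
Proof.
move=> sL uL pL uS uL' xL yL ux uy; apply/eqP/negPn/negP => nxy.
wlog [a [m [d eL]]] : x y xL yL ux uy nxy / exists a m d, L = a ++ x :: m ++ y :: d.
  move=> wl; have [a [m [d [eL|eL]]]] := split_two xL yL nxy.
    by apply: (wl x y) => //; exists a, m, d.
  by apply: (wl y x) => //; [rewrite eq_sym | exists a, m, d].
have eL' : L = a ++ (x :: rcons m y) ++ d by rewrite eL /= cat_rcons.
suff : ~~ e (last u (x :: rcons m y)) u by rewrite /= last_rcons e_sym uy.
apply: acyclic_no_closing_edge.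
- by rewrite /= uS; move: sL; rewrite eL' !all_cat => /and3P[].
- rewrite cons_uniq (uniq_infix (a := a) (d := d)) -?eL' // andbT.
  by apply: contra uL' => uxmy; rewrite eL' !mem_cat uxmy orbT.
- by rewrite /= ux; move: pL; rewrite eL' => /sorted_infix.
- by rewrite /= size_rcons.
Qed.

Lemma shortest_walk_attachment L x0 q x u : all (mem S) L -> uniq L -> sorted e L ->
  x0 \in S -> shortest_walk x0 L q -> x \in L -> x != last x0 q ->
  u \in belast x0 q -> ~~ e x u.
Proof.
move=> sL uL pL x0S sq xL xc /mem_belast_nth[t ltq ->].
have [pq qS cL _] := sq.
have uS : nth x0 (x0 :: q) t \in S.
  by apply: (all_nthP x0 (_ : all (mem S) (x0 :: q))); rewrite /= ?inE ?x0S ?qS // ltnS ltnW.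
have [lt1|ge1] := ltnP t.+1 (size q).
  by rewrite e_sym (shortest_walk_far sq lt1 (allP sL x xL)).
have size_q : size q = t.+1 by apply/eqP; rewrite eqn_leq ge1 ltq.
have uc : e (nth x0 (x0 :: q) t) (last x0 q).
  by rewrite -nth_last size_q; apply: (pathP x0 pq).
apply/negP => exu; move/eqP: xc; apply.
apply: (acyclic_single_attachment sL uL pL uS (shortest_walk_before_end sq ltq) xL cL _ uc).
by rewrite e_sym.
Qed.

Lemma acyclic_spider l1 l2 l3 : conn_in e S -> l1 \in S -> l2 \in S -> l3 \in S ->
  exists c Q1 Q2 Q3, spider c Q1 Q2 Q3 l1 l2 l3.
Proof.
move=> connS l1S l2S l3S.
have [p [pL uL sL lL]] : exists p, [/\ path e l1 p, uniq (l1 :: p),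
    all (mem S) (l1 :: p) & last l1 p = l2].
  have [p [pp sp <-]] := connS l1 l2 l1S l2S; case: (shortenP pp) => p' pp' up' sub.
  by exists p'; split => //=; rewrite l1S; apply/allP => x /sub; apply: (allP sp).
have [q sq] : exists q, shortest_walk l3 (l1 :: p) q.
  have [r [pr sr lr]] := connS l3 l1 l3S l1S.
  by apply: (shortest_walk_exists pr sr); rewrite lr mem_head.
have [pq _ cL _] := sq.
have [c lq] : {c | last l3 q = c} by exists (last l3 q).
rewrite lq in cL.
case/splitPl: p / cL pL uL sL lL sq => p1 p2 lc pL uL sL lL sq.
have eL : l1 :: p1 ++ p2 = belast l1 p1 ++ c :: p2 by rewrite -cat_cons lastI lc cat_rcons.
have c_out : c \notin belast l1 p1 ++ p2.
  by move: uL; rewrite eL (perm_uniq (permEl (perm_catCA _ [:: c] _))) cons_uniq => /andP[].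
have attached x u : x \in belast l1 p1 ++ p2 -> u \in belast l3 q -> ~~ e x u.
  move=> xAB uq; apply: (shortest_walk_attachment sL uL pL l3S sq) => //.
    by rewrite eL mem_cat inE -orbCA -mem_cat xAB orbT.
  by rewrite lq; apply: contraNneq c_out => <-.
have /andP[pp1 pp2] : path e l1 p1 && path e c p2 by rewrite -lc -cat_path.
exists c, (rev (belast l1 p1)), p2, (rev (belast l3 q)); split.
- by rewrite -lc; apply/leg_rev.
- by split => //; rewrite -lL last_cat lc.
- by rewrite -lq; apply/leg_rev.
split=> x y; rewrite ?mem_rev => xA yB.
- by apply: (acyclic_chordless (c := c) _ _ _ xA yB); rewrite -eL.
- by apply: attached => //; rewrite mem_cat xA.
- by apply: attached => //; rewrite mem_cat xA orbT.
Qed.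

End Acyclic.
End Walks.

Lemma eq_set2 (U : finType) (P : {set U}) a b :
  #|P| = 2 -> a \in P -> b \in P -> a != b -> P = [set a; b].
Proof.
move=> cP aP bP neq_ab; apply/esym/eqP; rewrite eqEcard cards2 neq_ab cP andbT.
by apply/subsetP => x; rewrite !inE => /orP[]/eqP->.
Qed.

Lemma set2_other (U : finType) (a b c : U) : c \in [set a; b] -> c != a -> c = b.
Proof. by rewrite !inE => /orP[]/eqP-> //; rewrite eqxx. Qed.

Lemma set2_meet (U : finType) (a b c d : U) : b != c ->
  d \in [set a; b] -> d \in [set a; c] -> d = a.
Proof.
move=> neq_bc dab dac; apply/eqP/negPn/negP => nda.
by move: neq_bc; rewrite -(set2_other dab nda) -(set2_other dac nda) eqxx.
Qed.

Lemma card2_collision (U : finType) (P : {set U}) a b c :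
  #|P| = 2 -> a \in P -> b \in P -> c \in P -> [|| a == b, a == c | b == c].
Proof.
move=> cP aP bP cP'; have [//|neq_ab /=] := eqVneq a b.
by move: cP'; rewrite (eq_set2 cP aP bP neq_ab) !inE => /orP[]/eqP->; rewrite eqxx ?orbT.
Qed.

Lemma card3_elems (U : finType) (A : {set U}) : #|A| = 3 ->
  exists a b c, [/\ [/\ a \in A, b \in A & c \in A], a != b, a != c & b != c].
Proof.
move=> cA; have [a aA] : exists a, a \in A by apply/card_gt0P; rewrite cA.
have /cards2P[b [c [neq_bc eA]]] : #|A :\ a| == 2.
  by move: cA; rewrite (cardsD1 a) aA add1n => -[->].
have : b \in A :\ a /\ c \in A :\ a by rewrite eA !inE !eqxx orbT.
by rewrite !inE => -[/andP[nba bA] /andP[nca cA']]; exists a, b, c; rewrite ![a == _]eq_sym.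
Qed.

Section Net.
Variable T : finType.
Variable e : rel T.
Variable X : {set T}.
Variable H : mgraph T.
Hypothesis H_wf : mg_wf H.
Hypothesis arcs_partition : partition (arcs H) X.
Hypothesis arc_meets_end : forall E V, E \in arcs H -> V \in nodes H ->
  (E :&: V != set0) = (V \in ends H E).
Hypothesis adj_between_arcs : forall u v E F, u \in X -> v \in X ->
  E \in arcs H -> F \in arcs H -> E != F -> u \in E -> v \in F ->
  (e u v <-> exists2 V, V \in ends H E :&: ends H F & (u \in V) && (v \in V)).

Lemma arc_eq E F x : E \in arcs H -> F \in arcs H -> x \in E -> x \in F -> E = F.
Proof.
move=> EA FA xE xF; apply/eqP/negPn/negP => neqEF.
case/and3P: arcs_partition => _ /trivIsetP/(_ E F EA FA neqEF)/disjointFr/(_ xE).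
by rewrite xF.
Qed.

Lemma arc_cover x : x \in X -> exists2 E, E \in arcs H & x \in E.
Proof. by case/and3P: arcs_partition => /eqP <- _ _ /bigcupP[E]; exists E. Qed.

Lemma mem_arcX E x : E \in arcs H -> x \in E -> x \in X.
Proof. by case/and3P: arcs_partition => /eqP <- _ _ EA xE; apply/bigcupP; exists E. Qed.

Lemma end_node E V : E \in arcs H -> V \in ends H E -> V \in nodes H.
Proof. by move=> /H_wf[/subsetP + _]; apply. Qed.

Lemma node_end E V x : E \in arcs H -> V \in nodes H -> x \in E -> x \in V ->
  V \in ends H E.
Proof.
by move=> EA VN xE xV; rewrite -arc_meets_end //; apply/set0Pn; exists x; rewrite inE xE.
Qed.

Lemma ends_pair E V : E \in arcs H -> V \in ends H E ->
  exists2 W, W != V & ends H E = [set V; W].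
Proof.
move=> /H_wf[_ /eqP/cards2P[P [Q [neqPQ ->]]]]; rewrite !inE => /orP[]/eqP->.
  by exists Q; rewrite // eq_sym.
by exists P; rewrite // setUC.
Qed.

Lemma adjH_ends E U W : E \in arcs H -> ends H E = [set U; W] -> U != W -> adjH H U W.
Proof. by move=> EA eE nUW; apply/existsP; exists E; rewrite EA eE !inE !eqxx orbT. Qed.

Lemma adj_through_end u v E F V : E \in arcs H -> F \in arcs H -> E != F ->
  u \in E -> v \in F -> V \in ends H E -> V \in ends H F -> u \in V -> v \in V -> e u v.
Proof.
move=> EA FA neqEF uE vF VE VF uV vV.
apply/(adj_between_arcs (mem_arcX EA uE) (mem_arcX FA vF) EA FA neqEF uE vF).
by exists V; rewrite ?inE ?VE ?VF ?uV.
Qed.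

Lemma mem_triad x E F G (V A B : {set T}) :
  E \in arcs H -> F \in arcs H -> G \in arcs H -> E != F -> G != E -> G != F ->
  ends H E = [set V; A] -> ends H F = [set V; B] -> ends H G = [set A; B] ->
  A != V -> B != V -> A != B ->
  [|| x \in E, x \in V | x \in A] -> [|| x \in F, x \in V | x \in B] ->
  [|| x \in G, x \in A | x \in B] -> x \in triad V A B.
Proof.
move=> EA FA GA nEF nGE nGF eE eF eG nAV nBV nAB.
have VN : V \in nodes H by apply: (end_node EA); rewrite eE !inE eqxx.
have AN : A \in nodes H by apply: (end_node EA); rewrite eE !inE eqxx orbT.
have BN : B \in nodes H by apply: (end_node FA); rewrite eF !inE eqxx orbT.
have two_arcs K K' : K \in arcs H -> K' \in arcs H -> K != K' -> ~~ [&& x \in K & x \in K'].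
  by move=> KA K'A; apply: contraNN => /andP[xK xK']; rewrite (arc_eq KA K'A xK xK').
have off_end K N : K \in arcs H -> N \in nodes H -> N \notin ends H K ->
    ~~ [&& x \in K & x \in N].
  by move=> KA NN; apply: contraNN => /andP[xK xN]; apply: node_end xK xN.
have dEF := two_arcs _ _ EA FA nEF.
have dGE := two_arcs _ _ GA EA nGE.
have dGF := two_arcs _ _ GA FA nGF.
have dEB : ~~ [&& x \in E & x \in B].
  by apply: off_end; rewrite // eE !inE negb_or nBV eq_sym.
have dFA : ~~ [&& x \in F & x \in A].
  by apply: off_end; rewrite // eF !inE negb_or nAV.
have dGV : ~~ [&& x \in G & x \in V].
  by apply: off_end; rewrite // eG !inE negb_or !(eq_sym V) nAV.
rewrite /triad !inE; move: dEF dGE dGF dEB dFA dGV.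
by case: (x \in E); case: (x \in F); case: (x \in G); case: (x \in V); case: (x \in A);
  case: (x \in B).
Qed.

Definition leaf_triple (l1 l2 l3 : T) : Prop :=
  [/\ [set l1] \in nodes H, [set l2] \in nodes H, [set l3] \in nodes H &
    [&& l1 != l2, l1 != l3 & l2 != l3]].

Lemma leaf_triple_exists : #|leafnodes H| = 3 ->
  (forall V, V \in leafnodes H -> exists v, leafG e v /\ V = [set v]) ->
  exists l1 l2 l3, [/\ leafG e l1, leafG e l2, leafG e l3 & leaf_triple l1 l2 l3].
Proof.
move=> card_leaves leaf_vertex.
have [V1 [V2 [V3 [[L1 L2 L3] n12 n13 n23]]]] := card3_elems card_leaves.
have [l1 [lf1 eV1]] := leaf_vertex _ L1; have [l2 [lf2 eV2]] := leaf_vertex _ L2.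
have [l3 [lf3 eV3]] := leaf_vertex _ L3; subst V1 V2 V3.
move: L1 L2 L3; rewrite !inE => /andP[N1 _] /andP[N2 _] /andP[N3 _].
exists l1, l2, l3; split => //; split => //.
by apply/and3P; split; [move: n12 | move: n13 | move: n23]; apply: contraNneq => ->.
Qed.

Section Tamed.
Variable S : {set T}.
Hypothesis S_tamed : tamed_in H S.

Lemma tamed_arc_or_end x y Y (U W : {set T}) : x \in S -> y \in S ->
  Y \in arcs H -> y \in Y -> ends H Y = [set U; W] -> [|| x \in Y, x \in U | x \in W].
Proof.
move=> xS yS YA yY eY; case: (S_tamed xS yS) => [[K KA /andP[xK yK]]|[N NN /andP[xN yN]]].
  by rewrite (arc_eq YA KA yY yK) xK.
by move: (node_end YA NN yY yN); rewrite eY !inE => /orP[]/eqP eN; rewrite -eN xN ?orbT.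
Qed.

Lemma tamed_common_end x y K K' : x \in S -> y \in S ->
  K \in arcs H -> K' \in arcs H -> K != K' -> x \in K -> y \in K' ->
  exists N, [/\ N \in ends H K, N \in ends H K', x \in N & y \in N].
Proof.
move=> xS yS KA K'A neqK xK yK'.
case: (S_tamed xS yS) => [[M MA /andP[xM yM]]|[N NN /andP[xN yN]]].
  by rewrite (arc_eq KA MA xK xM) (arc_eq K'A MA yK' yM) eqxx in neqK.
by exists N; split => //; [apply: (node_end KA NN xK xN) | apply: (node_end K'A NN yK' yN)].
Qed.

Hypothesis S_subX : S \subset X.

Lemma tamed_third_arc s v w E F (V A B : {set T}) : s \in S -> v \in S -> w \in S ->
  E \in arcs H -> F \in arcs H -> E != F -> s \in E -> v \in F -> w \notin V ->
  ends H E = [set V; A] -> ends H F = [set V; B] -> A != B ->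
  exists G, [/\ G \in arcs H, w \in G, G != E, G != F & ends H G = [set A; B]].
Proof.
move=> sS vS wS EA FA neqEF sE vF wV eE eF neqAB.
have [G GA wG] := arc_cover (subsetP S_subX w wS).
have neqGE : G != E.
  apply: contraNneq wV => eGE; move: wG; rewrite eGE => wE.
  have [N [NE NF wN _]] := tamed_common_end wS vS EA FA neqEF wE vF.
  by move: NE NF; rewrite eE eF => NE NF; rewrite -(set2_meet neqAB NE NF).
have neqGF : G != F.
  apply: contraNneq wV => eGF; move: wG; rewrite eGF => wF.
  have neqFE : F != E by rewrite eq_sym.
  have [N [NF NE wN _]] := tamed_common_end wS sS FA EA neqFE wF sE.
  by move: NE NF; rewrite eE eF eq_sym in neqAB * => NE NF; rewrite -(set2_meet neqAB NF NE).
have [N1 [N1G N1E wN1 _]] := tamed_common_end wS sS GA EA neqGE wG sE.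
have [N2 [N2G N2F wN2 _]] := tamed_common_end wS vS GA FA neqGF wG vF.
have off_V (N : {set T}) : w \in N -> N != V by move=> wN; apply: contraNneq wV => <-.
move: N1E N2F; rewrite eE eF => /set2_other/(_ (off_V _ wN1)) eN1.
move=> /set2_other/(_ (off_V _ wN2)) eN2.
exists G; split => //; rewrite -eN1 -eN2 in neqAB *.
exact: eq_set2 (H_wf GA).2 N1G N2G neqAB.
Qed.

Lemma tamed_local : (exists V, V \in nodes H) -> ~ has_parallel_arcs H -> local H S.
Proof.
move=> [V0 V0N] no_parallel.
have [->|[s sS]] := set_0Vmem S; first by left; exists V0; rewrite ?sub0set.
have [E EA sE] := arc_cover (subsetP S_subX s sS).
have [|/subsetPn[v vS vE]] := boolP (S \subset E); first by right; left; exists E.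
have [F FA vF] := arc_cover (subsetP S_subX v vS).
have neqEF : E != F by apply: contraNneq vE => ->.
have [V [VE VF sV vV]] := tamed_common_end sS vS EA FA neqEF sE vF.
have [|/subsetPn[w wS wV]] := boolP (S \subset V).
  by left; exists V => //; apply: end_node VE.
have [A nAV eE] := ends_pair EA VE.
have [B nBV eF] := ends_pair FA VF.
have nAB : A != B.
  by apply: contra_not_neq no_parallel => eAB; exists E, F; rewrite eE eF eAB.
have [G [GA wG nGE nGF eG]] := tamed_third_arc sS vS wS EA FA neqEF sE vF wV eE eF nAB.
right; right; exists V, A, B; split.
- exact: end_node VE.
- by apply: (end_node EA); rewrite eE !inE eqxx orbT.
- by apply: (end_node FA); rewrite eF !inE eqxx orbT.
- rewrite (adjH_ends EA eE) ?(adjH_ends GA eG) //= 1?eq_sym //.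
  by apply: (adjH_ends FA); rewrite 1?setUC // eq_sym.
apply/subsetP => x xS; apply: (mem_triad EA FA GA) => //.
- exact: (tamed_arc_or_end xS sS EA sE eE).
- exact: (tamed_arc_or_end xS vS FA vF eF).
- exact: (tamed_arc_or_end xS wS GA wG eG).
Qed.

End Tamed.

Section Taming.
Hypothesis e_sym : symmetric e.
Hypothesis nodes_subX : forall V, V \in nodes H -> V \subset X.
Hypothesis H_taming : taming e H X.

Lemma leaf_nodeX l : [set l] \in nodes H -> l \in X.
Proof. by move/nodes_subX/subsetP; apply; rewrite inE. Qed.

Lemma cross_free_shared_end A B y z K K' N : cross_free e A B -> y \in A -> z \in B ->
  K \in arcs H -> K' \in arcs H -> K != K' -> N \in ends H K -> N \in ends H K' ->
  y \in K :&: N -> z \in K' :&: N -> False.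
Proof.
move=> cAB yA zB KA K'A nKK' NK NK' /setIP[yK yN] /setIP[zK' zN].
by move: (cAB y z yA zB); rewrite (adj_through_end KA K'A nKK' yK zK' NK NK' yN zN).
Qed.

Lemma tamed_walk_nbrs r ts : r \notin X ->
  all (fun t => path e r t && ~~ has (mem X) t) ts ->
  tamed_in H (nbrs_in e X [set y in r :: flatten ts]).
Proof.
move=> rX /allP walks; apply: H_taming.
  apply/subsetP => y; rewrite !inE => /orP[/eqP-> //|/flattenP[t /walks/andP[_]]].
  by move/hasPn => tX /tX.
apply: (conn_in_from e_sym (r := r)) => [|x]; first by rewrite inE mem_head.
rewrite inE in_cons => /orP[/eqP->|/flattenP[t tts xt]]; first by exists [::].
have /andP[pt _] := walks t tts.
have xrt : x \in r :: t by rewrite in_cons xt orbT.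
have [p [pp sp lp]] := path_prefix pt xrt.
exists p; split => //; apply/allP => y /sp yt; rewrite !inE.
by apply/orP; right; apply/flattenP; exists t.
Qed.

(* [A] is a walk and [B] the same walk without its first vertex. *)
Definition exits_through (E : {set T}) (A B : seq T) (M : {set T}) : Prop :=
  exists y z F, [/\ y \in A, z \in B, F \in arcs H, F != E &
    [/\ M \in ends H E, M \in ends H F, y \in E :&: M & z \in F :&: M]].

Lemma exits_through_sub E A B A' B' M : {subset A <= A'} -> {subset B <= B'} ->
  exits_through E A B M -> exits_through E A' B' M.
Proof.
by move=> sA sB [y [z [F [yA zB FA nFE ends_yz]]]]; exists y, z, F; split; auto.
Qed.

Lemma exits_through_leaf E A B l : E \in arcs H -> l \in E ->
  ~ exits_through E A B [set l].
Proof.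
move=> EA lE [y [z [F [_ _ FA nFE [_ _ _ /setIP[zF]]]]]].
by rewrite inE => /eqP zl; move: nFE; rewrite (arc_eq EA FA lE) -?zl ?eqxx.
Qed.

Lemma detour_common_end a b t E F : E \in arcs H -> F \in arcs H -> E != F ->
  a \in E -> b \in F -> ~~ has (mem X) t -> path e a (rcons t b) ->
  exists M, [/\ M \in ends H E, M \in ends H F, a \in M & b \in M].
Proof.
move=> EA FA nEF aE bF; case: t => [_ /andP[eab _]|x t].
  have [M /setIP[ME MF] /andP[aM bM]] := (adj_between_arcs (mem_arcX EA aE)
    (mem_arcX FA bF) EA FA nEF aE bF).1 eab.
  by exists M.
rewrite /= negb_or rcons_path /= => /andP[xX tX] /and3P[eax pxt etb].
have Y_tamed := tamed_walk_nbrs (ts := [:: t]) xX; rewrite /= pxt tX cats0 in Y_tamed.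
apply: (tamed_common_end (Y_tamed isT)) => //; rewrite inE ?(mem_arcX EA aE) ?(mem_arcX FA bF).
  by apply/existsP; exists x; rewrite inE mem_head.
by apply/existsP; exists (last x t); rewrite inE mem_last e_sym.
Qed.

Lemma walk_exits_arc E a s : E \in arcs H -> a \in E -> path e a s ->
  last a s \in X -> last a s \notin E -> exists M, exits_through E (a :: s) s M.
Proof.
move=> EA; have [n] := ubnP (size s); elim: n => // n IHn in a s *.
rewrite ltnS => le_sn aE pas lX lE.
have : has (mem X) s.
  case: s lE lX {pas le_sn} => [|y s] lE lX; first by rewrite aE in lE.
  by apply/hasP; exists (last y s); rewrite ?mem_last.
move=> hasX; case: (split_find hasX) pas le_sn lX lE => b t r bX tX.
rewrite cat_path last_cat last_rcons size_cat size_rcons => /andP[patb pbr] le_sn lX lE.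
have [F FA bF] := arc_cover bX.
have [eFE|nFE] := eqVneq F E.
  move: bF; rewrite eFE => bE.
  have lt_rn : size r < n by apply: leq_trans le_sn; rewrite addSn ltnS leq_addl.
  have [M ex] := IHn b r lt_rn bE pbr lX lE.
  exists M; apply: exits_through_sub ex => [y|y yr]; last by rewrite mem_cat yr orbT.
  by rewrite !(inE, mem_cat, mem_rcons) => /orP[->|->]; rewrite ?orbT.
have nEF : E != F by rewrite eq_sym.
have [M [ME MF aM bM]] := detour_common_end EA FA nEF aE bF tX patb.
exists M, a, b, F; split; rewrite ?mem_head ?mem_cat ?mem_rcons ?mem_head //.
by split; rewrite // inE ?aE ?bF.
Qed.

Definition leg_end (E : {set T}) (c : T) (Q : seq T) (l : T) (M : {set T}) : Prop :=
  M \in ends H E /\ (l \in E /\ M = [set l] \/ exits_through E (c :: Q) Q M).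

Definition enters (E : {set T}) (c : T) (Q : seq T) (l : T) : Prop :=
  exists a s, [/\ a \in E, path e a s, last a s = l, {subset a :: s <= c :: Q} &
    {subset s <= Q}].

Lemma enters_hub (E : {set T}) c Q l : c \in E -> leg e c Q l -> enters E c Q l.
Proof. by move=> cE [pQ <-]; exists c, Q; split=> // x. Qed.

Lemma leg_end_exists E c Q l : E \in arcs H -> [set l] \in nodes H ->
  enters E c Q l -> exists M, leg_end E c Q l M.
Proof.
move=> EA lN [a [s [aE pas las sub_as sub_s]]]; subst l.
have [lE|lE] := boolP (last a s \in E).
  by exists [set last a s]; split; [apply: node_end lE _; rewrite ?inE | left].
have [M ex] := walk_exits_arc EA aE pas (leaf_nodeX lN) lE.
exists M; split; last by right; apply: exits_through_sub ex.
by case: ex => [y [z [F [_ _ _ _ []]]]].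
Qed.

Lemma leg_end_leaf_cases E c Qi Qj li lj M : E \in arcs H -> li != lj ->
  leg_end E c Qi li M -> leg_end E c Qj lj M ->
  exits_through E (c :: Qi) Qi M /\ exits_through E (c :: Qj) Qj M.
Proof.
move=> EA nl [_ [[liE ->]|exi]] [_ [[ljE eM]|exj]] //.
- by move: nl; rewrite (set1_inj eM) eqxx.
- by case: (exits_through_leaf EA liE exj).
- by rewrite eM in exi; case: (exits_through_leaf EA ljE exi).
Qed.

Lemma double_exit_at_hub E c Qi Qj M : E \in arcs H -> cross_free e Qi Qj ->
  exits_through E (c :: Qi) Qi M -> exits_through E (c :: Qj) Qj M ->
  c \in E :&: M /\ exists F zi zj, [/\ F \in arcs H, F != E, M \in ends H F,
    (zi \in Qi) && (zi \in F :&: M) & (zj \in Qj) && (zj \in F :&: M)].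
Proof.
move=> EA cQ [yi [zi [Fi [yiQ ziQ FiA nFiE [ME MFi yiEM ziFM]]]]].
move=> [_ [zj [Fj [_ zjQ FjA nFjE [_ MFj _ zjFM]]]]].
have yic : yi = c.
  (* Otherwise [yi] and [zj] would be adjacent by (N6). *)
  move: yiQ; rewrite in_cons => /orP[/eqP // | yiQ].
  by case: (cross_free_shared_end cQ yiQ zjQ EA FjA _ ME MFj yiEM zjFM); rewrite eq_sym.
have [eF|nF] := eqVneq Fi Fj.
  move: zjFM; rewrite -eF => zjFM.
  by split; [rewrite -yic | exists Fi, zi, zj; rewrite ziQ zjQ].
by case: (cross_free_shared_end cQ ziQ zjQ FiA FjA nF MFi MFj ziFM zjFM).
Qed.

Lemma leg_bounce F M W c Q l z Q' z' : F \in arcs H -> ends H F = [set M; W] ->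
  [set l] \in nodes H -> c \in M -> c \notin F -> leg e c Q l ->
  z \in Q -> z \in F :&: M -> z' \in Q' -> z' \in F :&: M -> cross_free e Q Q' ->
  leg_end F c Q l W.
Proof.
move=> FA eF lN cM cF [pQ lQ] zQ zFM z'Q' z'FM cQ.
have enF : enters F c Q l.
  case/splitPr: Q / zQ pQ lQ cQ => p r; rewrite cat_path last_cat /= => /and3P[_ _ pzr] lzr _.
  exists z, r; split => //; first by case/setIP: zFM.
    by move=> y; rewrite !(inE, mem_cat) => /orP[->|->]; rewrite ?orbT.
  by move=> y yr; rewrite !(inE, mem_cat) yr !orbT.
have [N [NF endN]] := leg_end_exists FA lN enF.
move: (NF); rewrite eF !inE => /orP[]/eqP eN; subst N; last by split.
case: endN => [[lF eM] | [_ [z2 [G [_ z2Q GA nGF [_ MG _ z2GM]]]]]].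
  case/setIP: zFM => zF; rewrite eM inE => /eqP zl; move: cM; rewrite eM inE => /eqP cl.
  by move: cF; rewrite cl -zl zF.
by case: (cross_free_shared_end cQ z2Q z'Q' GA FA nGF MG NF z2GM z'FM).
Qed.

Lemma leg_ends_differ E c Qi Qj li lj M : E \in arcs H -> cross_free e Qi Qj ->
  li != lj -> [set li] \in nodes H -> [set lj] \in nodes H ->
  leg e c Qi li -> leg e c Qj lj -> leg_end E c Qi li M -> leg_end E c Qj lj M -> False.
Proof.
(* Both legs pass from [c] through [M] into one arc [F]; both then leave [F]
   through its other end, which is impossible since [c] is not in [F]. *)
move=> EA cQ nl liN ljN legi legj endi endj.
have [exi exj] := leg_end_leaf_cases EA nl endi endj.
have [/setIP[cE cM] [F [zi [zj [FA nFE MF /andP[ziQ ziFM] /andP[zjQ zjFM]]]]]] :=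
  double_exit_at_hub EA cQ exi exj.
have [W _ eF] := ends_pair FA MF.
have cF : c \notin F by apply: contra nFE => cF; rewrite (arc_eq FA EA cF cE).
have endi' := leg_bounce FA eF liN cM cF legi ziQ ziFM zjQ zjFM cQ.
have endj' := leg_bounce FA eF ljN cM cF legj zjQ zjFM ziQ ziFM (cross_freeC e_sym cQ).
have [exi' exj'] := leg_end_leaf_cases FA nl endi' endj'.
by case: (double_exit_at_hub FA cQ exi' exj') => /setIP[cF' _]; rewrite cF' in cF.
Qed.

Lemma three_legs_end E c Q1 Q2 Q3 l1 l2 l3 M1 M2 M3 : E \in arcs H ->
  spider e c Q1 Q2 Q3 l1 l2 l3 -> leaf_triple l1 l2 l3 ->
  leg_end E c Q1 l1 M1 -> leg_end E c Q2 l2 M2 -> leg_end E c Q3 l3 M3 -> False.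
Proof.
move=> EA [leg1 leg2 leg3 [c12 c13 c23]] [N1 N2 N3 /and3P[n12 n13 n23]] end1 end2 end3.
case/or3P: (card2_collision (H_wf EA).2 end1.1 end2.1 end3.1) => /eqP eM.
- by rewrite -eM in end2; apply: (leg_ends_differ EA c12 n12 N1 N2 leg1 leg2 end1 end2).
- by rewrite -eM in end3; apply: (leg_ends_differ EA c13 n13 N1 N3 leg1 leg3 end1 end3).
- by rewrite -eM in end3; apply: (leg_ends_differ EA c23 n23 N2 N3 leg2 leg3 end2 end3).
Qed.

Lemma leg_entry_point c Q l : c \notin X -> leg e c Q l -> l \in X ->
  exists t x, [/\ path e c t && ~~ has (mem X) t, x \in X, x \in Q, e (last c t) x &
    forall E : {set T}, x \in E -> enters E c Q l].
Proof.
move=> cX [pQ lQ] lX.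
have : has (mem X) Q.
  case: Q pQ lQ => [_ lc|y Q _ lyQ]; first by move: lX; rewrite -lc /= (negbTE cX).
  by apply/hasP; exists l => //; rewrite -lyQ /= mem_last.
move=> hasX; case: (split_find hasX) pQ lQ => x t r xX tX.
rewrite cat_path rcons_path last_cat last_rcons => /andP[/andP[pt etx] pxr] lr.
exists t, x; split; rewrite ?pt ?tX ?mem_cat ?mem_rcons ?mem_head //.
move=> E xE; exists x, r; split => // y; rewrite !(inE, mem_cat, mem_rcons).
  by case/orP=> ->; rewrite ?orbT.
by move=> ->; rewrite orbT.
Qed.

Lemma tamed_cross_free_same_arc S A B x x' K : tamed_in H S -> x \in S -> x' \in S ->
  x' \in X -> x \in A -> x' \in B -> cross_free e A B -> K \in arcs H -> x \in K -> x' \in K.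
Proof.
move=> S_tamed xS x'S x'X xA x'B cAB KA xK.
have [K' K'A x'K'] := arc_cover x'X; have [-> //|nK] := eqVneq K K'.
have [N [NK NK' xN x'N]] := tamed_common_end S_tamed xS x'S KA K'A nK xK x'K'.
by case: (cross_free_shared_end cAB xA x'B KA K'A nK NK NK'); rewrite inE ?xK ?x'K'.
Qed.

Lemma legs_enter_common_arc c Q1 Q2 Q3 l1 l2 l3 : c \notin X ->
  spider e c Q1 Q2 Q3 l1 l2 l3 -> l1 \in X -> l2 \in X -> l3 \in X ->
  exists2 E, E \in arcs H & [/\ enters E c Q1 l1, enters E c Q2 l2 & enters E c Q3 l3].
Proof.
move=> cX [leg1 leg2 leg3 [c12 c13 c23]] l1X l2X l3X.
have [t1 [x1 [w1 x1X x1Q e1 en1]]] := leg_entry_point cX leg1 l1X.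
have [t2 [x2 [w2 x2X x2Q e2 en2]]] := leg_entry_point cX leg2 l2X.
have [t3 [x3 [w3 x3X x3Q e3 en3]]] := leg_entry_point cX leg3 l3X.
have walks : all (fun t => path e c t && ~~ has (mem X) t) [:: t1; t2; t3].
  by rewrite /= w1 w2 w3.
have nbr t x : t \in [:: t1; t2; t3] -> x \in X -> e (last c t) x ->
    x \in nbrs_in e X [set y in c :: flatten [:: t1; t2; t3]].
  move=> tts xX etx; rewrite inE xX; apply/existsP; exists (last c t).
  rewrite e_sym etx andbT inE; move: (mem_last c t); rewrite !inE => /orP[-> //|lt].
  by apply/orP; right; apply/flattenP; exists t.
have same := tamed_cross_free_same_arc (tamed_walk_nbrs cX walks).
have [E EA x1E] := arc_cover x1X; exists E => //.
have t2s : t2 \in [:: t1; t2; t3] by rewrite !inE eqxx orbT.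
have t3s : t3 \in [:: t1; t2; t3] by rewrite !inE eqxx !orbT.
have n1 := nbr t1 x1 (mem_head _ _) x1X e1.
have n2 := nbr t2 x2 t2s x2X e2.
have n3 := nbr t3 x3 t3s x3X e3.
split; first exact: en1 x1E.
  exact/en2/(same _ _ _ _ _ n1 n2 x2X x1Q x2Q c12 EA x1E).
exact/en3/(same _ _ _ _ _ n1 n3 x3X x1Q x3Q c13 EA x1E).
Qed.

Lemma spider_not_tamed c Q1 Q2 Q3 l1 l2 l3 :
  spider e c Q1 Q2 Q3 l1 l2 l3 -> leaf_triple l1 l2 l3 -> False.
Proof.
move=> sp lt; have [N1 N2 N3 _] := lt.
have [E EA [en1 en2 en3]] : exists2 E, E \in arcs H &
    [/\ enters E c Q1 l1, enters E c Q2 l2 & enters E c Q3 l3].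
  have [cX|cX] := boolP (c \in X).
    have [E EA cE] := arc_cover cX; have [leg1 leg2 leg3 _] := sp.
    by exists E => //; split; apply: enters_hub.
  exact: legs_enter_common_arc cX sp (leaf_nodeX N1) (leaf_nodeX N2) (leaf_nodeX N3).
have [M1 end1] := leg_end_exists EA N1 en1.
have [M2 end2] := leg_end_exists EA N2 en2.
have [M3 end3] := leg_end_exists EA N3 en3.
exact: three_legs_end EA sp lt end1 end2 end3.
Qed.

End Taming.
End Net.

Theorem lemma3p5 (T : finType) (e : rel T)
    (e_sym : symmetric e) (e_irr : irreflexive e)
    (three_leaves : #|leavesG e| = 3) :
  (forall (X : {set T}) (H : mgraph T),
      is_net e H X -> taming e H X -> ~ exists S : {set T}, sapling e S) /\
  (forall (X : {set T}) (H : mgraph T),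
      is_net e H X -> ~ has_parallel_arcs H ->
      forall S : {set T}, S \subset X -> tamed_in H S -> local H S).
Proof.
(* The three leaves come from (N3). *)
split=> X H [wf [nodesX [_ [part [[card_leaves leaf_vertex] [_ [N5 N6]]]]]]].
  have [l1 [l2 [l3 [lf1 lf2 lf3 leaves]]]] := leaf_triple_exists card_leaves leaf_vertex.
  move=> tame [S [[_ [connS acyclic]] leavesS]].
  have inS l : leafG e l -> l \in S by move=> lf; apply: (subsetP leavesS); rewrite inE.
  have [c [Q1 [Q2 [Q3 sp]]]] :=
    acyclic_spider e_sym acyclic connS (inS _ lf1) (inS _ lf2) (inS _ lf3).
  exact: (spider_not_tamed wf part N5 N6 e_sym nodesX tame sp leaves).
move=> no_parallel S SX tS; apply: (tamed_local wf part N5 tS SX _ no_parallel).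
have [l1 [_ [_ [_ _ _ [N1 _ _ _]]]]] := leaf_triple_exists card_leaves leaf_vertex.
by exists [set l1].
Qed.
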